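(* Let $\lambda_0\in\mathbb D\setminus\{0\}$ and $y^0=(y_1^0,y_2^0,q^0)\in\widetilde{\mathbb G}_3$ with $y^0_1y^0_2\ne9q^0$, $|y^0_2|\le|y^0_1|$ and $\|\Phi_1(\cdot,y^0)\|_{H^\infty}<|\lambda_0|$. For $\nu>0$ let $Z_\nu=\begin{bmatrix}y^0_1/(3\lambda_0)&\nu w\\ \nu^{-1}w&y^0_2/3\end{bmatrix}$, where $w^2=\frac{y^0_1y^0_2-9q^0}{9\lambda_0}$. Let $\theta_1,\theta_2$ be the roots of $z+1/z=\frac{|\lambda_0|}{|y^0_1y^0_2-9q^0|}\left(9-\frac{|y^0_1|^2}{|\lambda_0|^2}-|y^0_2|^2+\frac{9|q^0|^2}{|\lambda_0|^2}\right)$. Then for every $\nu>0$ with $\theta_1<\nu^2<\theta_2$ we have $\|Z_\nu\|<1$ and the matrix $\mathcal K_{Z_\nu}(|\lambda_0|)$ is not positive definite.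
   Context: $\mathbb D$ open unit disc, $\|\cdot\|$ operator norm. $\widetilde{\mathbb G}_3=\{(\beta_1+\bar\beta_2q,\beta_2+\bar\beta_1q,q): q\in\mathbb D,\ |\beta_1|+|\beta_2|<3\}$. For $y=(y_1,y_2,q)$, $\Phi_1(z,y)=\frac{3qz-y_1}{y_2z-3}$ if $y_2z\ne3$ and $y_1y_2\ne9q$, $\Phi_1(z,y)=y_1/3$ if $y_1y_2=9q$; $\|\Phi_1(\cdot,y)\|_{H^\infty}=\sup_{z\in\mathbb D}|\Phi_1(z,y)|$. For a $2\times2$ matrix $Z$ with $\|Z\|<1$ and $0\le\rho<1$, $\mathcal K_Z(\rho)=\begin{bmatrix}[(1-\rho^2Z^*Z)(1-Z^*Z)^{-1}]_{11}&[(1-\rho^2)(1-ZZ^* )^{-1}Z]_{21}\\ [(1-\rho^2)Z^*(1-ZZ^* )^{-1}]_{12}&[(ZZ^*-\rho^2)(1-ZZ^* )^{-1}]_{22}\end{bmatrix}$. *)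

From HB Require Import structures.
From mathcomp Require Import all_boot all_order all_algebra.
From mathcomp Require Import all_classical all_reals ereal.
From mathcomp Require Import complex.
Set Implicit Arguments. Unset Strict Implicit. Unset Printing Implicit Defensive.
Import Order.TTheory GRing.Theory Num.Theory.
Local Open Scope ring_scope.
Local Open Scope classical_set_scope.
Local Open Scope ereal_scope.
Local Open Scope ring_scope.

Section Defs.
Variable R : realType.
Local Notation C := R[i].

Definition cabs (z : C) : R := Normc.normc z.

Definition unit_disc : set C := [set z | cabs z < 1].

Definition tG3 (y1 y2 q : C) : Prop :=
  cabs q < 1 /\
  exists b1 b2 : C, cabs b1 + cabs b2 < 3 /\
    y1 = b1 + (conjc b2) * q /\ y2 = b2 + (conjc b1) * q.

(* Phi_1(z, y); for y1*y2 <> 9q and y2 z = 3 the value is the MathComp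
   convention (division by 0 gives 0); this case never occurs on the disc. *)
Definition Phi1 (z y1 y2 q : C) : C :=
  if y1 * y2 == 9 * q then y1 / 3 else (3 * q * z - y1) / (y2 * z - 3).

Definition Hinf_Phi1 (y1 y2 q : C) : \bar R :=
  ereal_sup [set (cabs (Phi1 z y1 y2 q))%:E | z in unit_disc].

Definition vnorm (v : 'cV[C]_2) : R := Num.sqrt (\sum_i (cabs (v i 0)) ^+ 2).

Definition opnorm (Z : 'M[C]_2) : R :=
  sup [set vnorm (Z *m v) | v in [set v : 'cV[C]_2 | vnorm v = 1]].

Definition adjM {m n} (A : 'M[C]_(m, n)) : 'M[C]_(n, m) := (map_mx conjc A)^T.

Definition posdef (K : 'M[C]_2) : Prop :=
  forall v : 'cV[C]_2, v != 0 -> 0 < (adjM v *m K *m v) 0 0.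

Definition KZ (Z : 'M[C]_2) (rho : R) : 'M[C]_2 :=
  let r2 : C := ((rho ^+ 2)%:C)%C in
  let ZsZ := adjM Z *m Z in
  let ZZs := Z *m adjM Z in
  let A := (1 - r2 *: ZsZ) *m invmx (1 - ZsZ) in
  let B := ((1 - r2) *: invmx (1 - ZZs)) *m Z in
  let Cm := ((1 - r2) *: adjM Z) *m invmx (1 - ZZs) in
  let D := (ZZs - r2%:M) *m invmx (1 - ZZs) in
  \matrix_(i < 2, j < 2)
    if (i == 0 :> nat) then (if (j == 0 :> nat) then A 0 0 else B 1 0)
    else (if (j == 0 :> nat) then Cm 0 1 else D 1 1).

Definition Znu (y1 y2 lam w : C) (nu : R) : 'M[C]_2 :=
  \matrix_(i < 2, j < 2)
    if (i == 0 :> nat) then (if (j == 0 :> nat) then y1 / (3 * lam) else (nu%:C)%C * w)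
    else (if (j == 0 :> nat) then ((nu^-1)%:C)%C * w else y2 / 3).

End Defs.

(* Write Z_nu = [a b; c d].  Then det Z_nu = q / lam, and
   D := det (1 - Z^* Z) = 1 - |a|^2 - |b|^2 - |c|^2 - |d|^2 + |det Z|^2
   equals |y1 y2 - 9 q| / (9 |lam|) * (kappa - (nu^2 + nu^-2)), which is positive
   exactly when nu^2 lies strictly between the roots theta_1, theta_2 of
   z + 1/z = kappa.  The H^infty bound forces |q| <= |lam|: otherwise one can
   write down a point z of the disc with |Phi_1(z)| >= |lam|.  So |det Z| <= 1,
   which together with D > 0 makes 1 - Z^* Z positive definite, i.e. ||Z|| < 1.
   Finally K_Z(rho) has a real (1,1) entry, and
   D * det K_Z(rho) = - rho^2 D + (1 - rho^2) (|d|^2 - rho^2 |a|^2);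
   for rho = |lam| the assumption |y2| <= |y1| reads |d| <= rho |a|, so
   det K_Z(rho) < 0. *)

From HB Require Import structures.
From mathcomp Require Import all_boot all_order all_algebra.
From mathcomp Require Import all_classical all_reals ereal.
From mathcomp Require Import complex.
From mathcomp Require Import ring lra.
Set Implicit Arguments. Unset Strict Implicit. Unset Printing Implicit Defensive.
Import Order.TTheory GRing.Theory Num.Theory.
Local Open Scope ring_scope.
Local Open Scope complex_scope.

Section Modulus.
Variable R : realType.
Local Notation C := R[i].
Implicit Types x y : C.

(* Stated for [conjc] itself: the generic [rmorphM] & co. leave a packed
   morphism behind, which [ring] does not identify with [conjc]. *)
Lemma conjcD x y : conjc (x + y) = conjc x + conjc y. Proof. exact: rmorphD. Qed.
Lemma conjcB x y : conjc (x - y) = conjc x - conjc y. Proof. exact: rmorphB. Qed.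
Lemma conjcN x : conjc (- x) = - conjc x. Proof. exact: rmorphN. Qed.
Lemma conjcM x y : conjc (x * y) = conjc x * conjc y. Proof. exact: rmorphM. Qed.

Lemma cabs0 : cabs (0 : C) = 0. Proof. exact: Normc.normc0. Qed.
Lemma cabs1 : cabs (1 : C) = 1. Proof. exact: Normc.normc1. Qed.

Lemma cabsD x y : cabs (x + y) <= cabs x + cabs y. Proof. exact: le_normcD. Qed.

Lemma cabs_ge0 x : 0 <= cabs x.
Proof. by case: x => a b; apply: sqrtr_ge0. Qed.

Lemma cabsM x y : cabs (x * y) = cabs x * cabs y.
Proof. exact: Normc.normcM. Qed.

Lemma cabsV x : cabs x^-1 = (cabs x)^-1.
Proof. exact: Normc.normcV. Qed.

Lemma cabsN x : cabs (- x) = cabs x.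
Proof. exact: normcN. Qed.

Lemma cabsJ x : cabs (conjc x) = cabs x.
Proof. by case: x => a b; rewrite /cabs /= sqrrN. Qed.

Lemma cabs_real (a : R) : cabs a%:C = `|a|.
Proof. by rewrite /cabs /= expr0n addr0 sqrtr_sqr. Qed.

Lemma cabs_nat n : cabs (n%:R : C) = n%:R.
Proof. by rewrite -(rmorph_nat (real_complex R)) cabs_real ger0_norm. Qed.

Lemma cabs_gt0 x : x != 0 -> 0 < cabs x.
Proof.
move=> x_neq0; rewrite lt_def cabs_ge0 andbT.
by apply: contra x_neq0 => /eqP/Normc.eq0_normc ->.
Qed.

Lemma sqr_cabsE x : (cabs x)%:C ^+ 2 = x * conjc x.
Proof.
case: x => a b; rewrite -rmorphXn /cabs /= sqr_sqrtr ?addr_ge0 ?sqr_ge0 //.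
by simpc; congr (_ +i* _); ring.
Qed.

End Modulus.

(* Pushes [_%:C] and [conjc] down to the atoms, turning identities between
   moduli into ring identities in [R[i]]. *)
Ltac push_real_complex := rewrite ?(conjc_real, conjcK, conjcD, conjcB, conjcN, conjcM,
  conjc1, conjc0, conjc_nat, rmorphXn (real_complex _), rmorphD (real_complex _),
  rmorphB (real_complex _), rmorphN (real_complex _), rmorphM (real_complex _),
  fmorphV (real_complex _), rmorph1 (real_complex _), rmorph0 (real_complex _), sqr_cabsE).

Section Matrix2.
Variable R : realType.
Local Notation C := R[i].
Implicit Types a b c d k x y : C.

Definition mx2 a b c d : 'M[C]_2 :=
  \matrix_(i < 2, j < 2)
    if (i == 0 :> nat) then (if (j == 0 :> nat) then a else b)
    else (if (j == 0 :> nat) then c else d).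

Definition cv2 x y : 'cV[C]_2 := \matrix_(i < 2, j < 1) if (i == 0 :> nat) then x else y.

Local Ltac mx2_ext := apply/matrixP; case=> [[|[|?]] ?] [[|[|?]] ?];
  rewrite !mxE ?big_ord_recl ?big_ord0 ?mxE //=.

Lemma mx2E a b c d :
  (mx2 a b c d 0 0 = a) * (mx2 a b c d 0 1 = b) * (mx2 a b c d 1 0 = c) * (mx2 a b c d 1 1 = d).
Proof. by rewrite !mxE. Qed.

Lemma mx2_mul a b c d a' b' c' d' : mx2 a b c d *m mx2 a' b' c' d' =
  mx2 (a * a' + b * c') (a * b' + b * d') (c * a' + d * c') (c * b' + d * d').
Proof. by mx2_ext; rewrite addr0. Qed.

Lemma mx2_add a b c d a' b' c' d' :
  mx2 a b c d + mx2 a' b' c' d' = mx2 (a + a') (b + b') (c + c') (d + d').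
Proof. by mx2_ext. Qed.

Lemma mx2_opp a b c d : - mx2 a b c d = mx2 (- a) (- b) (- c) (- d).
Proof. by mx2_ext. Qed.

Lemma mx2_scale k a b c d : k *: mx2 a b c d = mx2 (k * a) (k * b) (k * c) (k * d).
Proof. by mx2_ext. Qed.

Lemma mx2_scalar k : k%:M = mx2 k 0 0 k.
Proof. by mx2_ext. Qed.

Lemma mx2_1 : 1 = mx2 1 0 0 1.
Proof. by mx2_ext. Qed.

Lemma adjM_mx2 a b c d : adjM (mx2 a b c d) = mx2 (conjc a) (conjc c) (conjc b) (conjc d).
Proof. by rewrite /adjM; mx2_ext. Qed.

Lemma invmx_mx2 a b c d e : e != 0 -> a * d - b * c = e ->
  invmx (mx2 a b c d) = mx2 (d / e) (- b / e) (- c / e) (a / e).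
Proof.
move=> e_neq0 det_e.
have mulK : mx2 a b c d *m mx2 (d / e) (- b / e) (- c / e) (a / e) = 1.
  by rewrite mx2_mul mx2_1 -det_e; congr mx2; field; rewrite det_e.
have [unitZ _] := mulmx1_unit mulK.
by rewrite -[RHS]mul1mx -(mulVmx unitZ) -mulmxA mulK mulmx1.
Qed.

Lemma mulmx_mx2_cv2 a b c d x y : mx2 a b c d *m cv2 x y = cv2 (a * x + b * y) (c * x + d * y).
Proof. by mx2_ext; rewrite addr0. Qed.

Lemma cv2_eq0 x y : (cv2 x y == 0) = (x == 0) && (y == 0).
Proof.
apply/eqP/andP => [/matrixP v0 | [/eqP-> /eqP->]]; last by mx2_ext.
by split; apply/eqP; [move: (v0 0 0) | move: (v0 1 0)]; rewrite !mxE.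
Qed.

Lemma cv2E (v : 'cV[C]_2) : v = cv2 (v 0 0) (v 1 0).
Proof.
apply/matrixP=> i j; rewrite !mxE (ord1 j).
by case: i => [[|[|?]] ?] //=; congr (v _ _); apply: val_inj.
Qed.

Lemma quadform_mx2 a b c d x y :
  (adjM (cv2 x y) *m mx2 a b c d *m cv2 x y) 0 0 =
  conjc x * (a * x + b * y) + conjc y * (c * x + d * y).
Proof. by rewrite -mulmxA mulmx_mx2_cv2 /adjM !mxE !big_ord_recl big_ord0 !mxE /= addr0. Qed.

Lemma not_posdef_mx2 a b c d (k e : R) :
  a = k%:C -> a * d - c * b = e%:C -> e < 0 -> ~ posdef (mx2 a b c d).
Proof.
move=> a_real det_e e_lt0 posK.
have [k_le0 | k_gt0] := lerP k 0.
  have := posK (cv2 1 0); rewrite cv2_eq0.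
  rewrite oner_eq0 quadform_mx2 a_real !(mulr0, mulr1, addr0) rmorph0 mul0r addr0 rmorph1 mul1r.
  by rewrite ltcR ltNge k_le0 => /(_ isT).
have v_neq0 : cv2 (- b) a != 0.
  by rewrite cv2_eq0 negb_and a_real fmorph_eq0 (gt_eqF k_gt0) orbT.
(* on the vector (-b, a) the form equals a^* (a d - c b) = k e < 0 *)
have := posK _ v_neq0; rewrite quadform_mx2.
have -> : conjc (- b) * (a * - b + b * a) + conjc a * (c * - b + d * a) =
  conjc a * (a * d - c * b) by ring.
by rewrite det_e a_real conjc_real -rmorphM ltcR pmulr_rgt0 // ltNge (ltW e_lt0).
Qed.

End Matrix2.

Section Contraction.
Variable R : realType.
Local Notation C := R[i].
Implicit Types a b c d x y : C.

(* [mx2_defect a b c d] is [det (1 - Z^* Z)] for [Z = mx2 a b c d]. *)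
Definition mx2_defect a b c d : R :=
  1 - cabs a ^+ 2 - cabs b ^+ 2 - cabs c ^+ 2 - cabs d ^+ 2 + cabs (a * d - b * c) ^+ 2.

Lemma mx2_contraction_gap a b c d :
  0 < mx2_defect a b c d -> cabs (a * d - b * c) <= 1 ->
  exists2 eta : R, 0 < eta & forall x y,
    cabs (a * x + b * y) ^+ 2 + cabs (c * x + d * y) ^+ 2
      <= (1 - eta) * (cabs x ^+ 2 + cabs y ^+ 2).
Proof.
move=> defect_gt0 det_le1.
set h11 := 1 - cabs a ^+ 2 - cabs c ^+ 2; set h22 := 1 - cabs b ^+ 2 - cabs d ^+ 2.
set h12 := conjc a * b + conjc c * d.
have defectE : mx2_defect a b c d = h11 * h22 - cabs h12 ^+ 2.
  by apply: complexI; rewrite /mx2_defect /h11 /h22 /h12; push_real_complex; ring.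
have [h11_gt0 h22_gt0] : 0 < h11 /\ 0 < h22.
  have det_sq : cabs (a * d - b * c) ^+ 2 <= 1 by rewrite expr_le1 ?cabs_ge0.
  have trace_gt0 : 0 < h11 + h22.
    by move: defect_gt0; rewrite /mx2_defect /h11 /h22; lra.
  have det_gt0 : 0 < h11 * h22.
    by move: defect_gt0; rewrite defectE; have := sqr_ge0 (cabs h12); lra.
  by nra.
(* det/trace of the positive matrix 1 - Z^* Z bounds its least eigenvalue from below *)
set eta := mx2_defect a b c d / (h11 + h22).
have eta_gt0 : 0 < eta by rewrite divr_gt0 // addr_gt0.
have etaE : eta * (h11 + h22) = mx2_defect a b c d by rewrite mulfVK // gt_eqF // addr_gt0.
have etaE2 : (h11 - eta) * (h22 - eta) - cabs h12 ^+ 2 = eta ^+ 2.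
  transitivity (h11 * h22 - cabs h12 ^+ 2 - eta * (h11 + h22) + eta ^+ 2); first by ring.
  by rewrite -defectE etaE subrr add0r.
have p_gt0 : 0 < h11 - eta.
  by have := sqr_ge0 (cabs h12); have := sqr_ge0 eta; nra.
clearbody eta; exists eta => // x y.
have sq_decomp : (h11 - eta) * ((1 - eta) * (cabs x ^+ 2 + cabs y ^+ 2)
      - (cabs (a * x + b * y) ^+ 2 + cabs (c * x + d * y) ^+ 2)) =
    cabs ((h11 - eta)%:C * x - h12 * y) ^+ 2 + eta ^+ 2 * cabs y ^+ 2.
  rewrite -etaE2; apply: complexI; rewrite /h11 /h22 /h12; push_real_complex; ring.
have : 0 <= cabs ((h11 - eta)%:C * x - h12 * y) ^+ 2 + eta ^+ 2 * cabs y ^+ 2.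
  by apply: addr_ge0; [exact: sqr_ge0 | apply: mulr_ge0; exact: sqr_ge0].
by rewrite -sq_decomp pmulr_rge0 // subr_ge0.
Qed.

Lemma vnorm_cv2 x y : vnorm (cv2 x y) = Num.sqrt (cabs x ^+ 2 + cabs y ^+ 2).
Proof. by rewrite /vnorm !big_ord_recl big_ord0 !mxE addr0. Qed.

Lemma opnorm_le (Z : 'M[C]_2) (s : R) :
  (forall v, vnorm v = 1 -> vnorm (Z *m v) <= s) -> opnorm Z <= s.
Proof.
move=> Zv_le; apply: ge_sup; last by move=> _ [v v1 <-]; apply: Zv_le.
exists (vnorm (Z *m cv2 1 0)), (cv2 1 0) => //=.
by rewrite vnorm_cv2 cabs1 cabs0 expr1n expr0n addr0 sqrtr1.
Qed.

Lemma opnorm_mx2_lt1 a b c d :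
  0 < mx2_defect a b c d -> cabs (a * d - b * c) <= 1 -> opnorm (mx2 a b c d) < 1.
Proof.
move=> defect_gt0 det_le1; have [eta eta_gt0 gap] := mx2_contraction_gap defect_gt0 det_le1.
apply: (@le_lt_trans _ _ (Num.sqrt (1 - eta))).
  apply: opnorm_le => v; rewrite [v]cv2E mulmx_mx2_cv2 !vnorm_cv2 => v_unit.
  have v_sq1 : cabs (v 0 0) ^+ 2 + cabs (v 1 0) ^+ 2 = 1.
    by rewrite -[LHS]sqr_sqrtr ?addr_ge0 ?sqr_ge0 // v_unit expr1n.
  by apply: ler_wsqrtr; rewrite -[1 - eta]mulr1 -{2}v_sq1; apply: gap.
by rewrite -[X in _ < X]sqrtr1 ltr_sqrt ?ltr01 // gtrBl.
Qed.

End Contraction.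

Section KZ.
Variable R : realType.
Local Notation C := R[i].

Lemma KZE (Z : 'M[C]_2) (r : R) : KZ Z r =
  let r2 := (r ^+ 2)%:C in
  mx2 (((1 - r2 *: (adjM Z *m Z)) *m invmx (1 - adjM Z *m Z)) 0 0)
      ((((1 - r2) *: invmx (1 - Z *m adjM Z)) *m Z) 1 0)
      ((((1 - r2) *: adjM Z) *m invmx (1 - Z *m adjM Z)) 0 1)
      (((Z *m adjM Z - r2%:M) *m invmx (1 - Z *m adjM Z)) 1 1).
Proof. by []. Qed.

Lemma KZ_mx2_not_posdef (a b c d : C) (r : R) :
  0 < mx2_defect a b c d -> 0 < r -> r <= 1 -> cabs d ^+ 2 <= r ^+ 2 * cabs a ^+ 2 ->
  ~ posdef (KZ (mx2 a b c d) r).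
Proof.
set D := mx2_defect a b c d => D_gt0 r_gt0 r_le1 d_le_ra.
have DE : D%:C = 1 - a * conjc a - b * conjc b - c * conjc c - d * conjc d
    + (a * d - b * c) * (conjc a * conjc d - conjc b * conjc c).
  by rewrite /D /mx2_defect; push_real_complex; ring.
have D_neq0 : D%:C != 0 by rewrite fmorph_eq0 gt_eqF.
rewrite KZE /= !adjM_mx2 !mx2_mul mx2_1 mx2_scalar !mx2_scale !mx2_opp !mx2_add.
rewrite !(mulr0, mul0r, add0r, addr0, mulr1, subr0, sub0r).
rewrite !(invmx_mx2 D_neq0); try by rewrite DE; ring.
rewrite !mx2_scale !mx2_mul !mx2E.
apply: (@not_posdef_mx2 _ _ _ _ _ (r ^+ 2 + (1 - r ^+ 2) * (1 - cabs b ^+ 2 - cabs d ^+ 2) / D)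
   ((- r ^+ 2 * D + (1 - r ^+ 2) * (cabs d ^+ 2 - r ^+ 2 * cabs a ^+ 2)) / D)).
- by push_real_complex; field; rewrite -DE.
- by push_real_complex; field; rewrite -DE.
- rewrite pmulr_llt0 ?invr_gt0 //.
  have r2_le1 : r ^+ 2 <= 1 by rewrite expr_le1 // ltW.
  have : (1 - r ^+ 2) * (cabs d ^+ 2 - r ^+ 2 * cabs a ^+ 2) <= 0.
    by rewrite mulr_ge0_le0 ?subr_ge0 ?subr_le0.
  have : 0 < r ^+ 2 * D by rewrite mulr_gt0 ?exprn_gt0.
  lra.
Qed.

End KZ.

Lemma add_inv_lt_between_roots (R : realFieldType) (th1 th2 c t : R) :
  th1 + th1^-1 = c -> th2 + th2^-1 = c -> 0 < t -> th1 < t < th2 -> t + t^-1 < c.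
Proof.
move=> th1E th2E t_gt0 /andP[th1_lt_t t_lt_th2].
have th2_neq0 : th2 != 0 by rewrite gt_eqF // (lt_trans t_gt0).
have root2 : th2 ^+ 2 - c * th2 + 1 = 0 by rewrite -th2E; field.
have th1_neq0 : th1 != 0.
  apply: contra_eq_neq root2 => th1_0; move: th1E; rewrite th1_0 invr0 addr0 => <-.
  by rewrite mul0r subr0 gt_eqF // ltr_pwDr ?ltr01 ?sqr_ge0.
have root1 : th1 ^+ 2 - c * th1 + 1 = 0 by rewrite -th1E; field.
have sumE : th1 + th2 = c.
  have : (th1 - th2) * (th1 + th2 - c) = 0.
    transitivity ((th1 ^+ 2 - c * th1 + 1) - (th2 ^+ 2 - c * th2 + 1)); first by ring.
    by rewrite root1 root2 subrr.
  move/eqP; rewrite mulf_eq0 !subr_eq0 (lt_eqF (lt_trans th1_lt_t t_lt_th2)) /=.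
  by move/eqP.
have prodE : th1 * th2 = 1.
  apply/eqP; rewrite eq_sym -subr_eq0; apply/eqP.
  by rewrite -root1 -sumE; ring.
have factorE : (t - th1) * (t - th2) / t = t + t^-1 - c.
  transitivity (t - (th1 + th2) + th1 * th2 / t); first by field; rewrite gt_eqF.
  by rewrite sumE prodE mul1r addrAC.
rewrite -subr_lt0 -factorE.
rewrite pmulr_llt0 ?invr_gt0 // pmulr_rlt0 ?subr_gt0 //.
by rewrite subr_lt0.
Qed.

Lemma quadratic_pos_near1 (R : realFieldType) (A B M : R) :
  0 < A -> 0 <= M -> 0 < A + B + M -> exists2 r, 0 < r < 1 & 0 < r ^+ 2 * A + B + r * M.
Proof.
move=> A_gt0 M_ge0 f1_gt0; set P := 2 * A + M.
have P_gt0 : 0 < P by rewrite /P; lra.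
have S_gt0 : 0 < A + B + M + P by lra.
(* with f r := r^2 A + B + r M, f r >= f 1 - (1 - r) P for r < 1, and the choice
   1 - r = f 1 / (f 1 + P) keeps this positive *)
exists (P / (A + B + M + P)).
  by rewrite divr_gt0 //= ltr_pdivrMr // mul1r ltrDr.
set r := P / _.
have r_lt1 : r < 1 by rewrite ltr_pdivrMr // mul1r ltrDr.
have oneBrE : (1 - r) * (A + B + M + P) = A + B + M.
  by rewrite mulrBl mul1r mulfVK ?gt_eqF //; ring.
have : (1 - r) * (A * (1 + r) + M) <= (1 - r) * P.
  by apply: ler_wpM2l; [rewrite subr_ge0 ltW | rewrite /P; nra].
have : (1 - r) * P < (1 - r) * (A + B + M + P).
  by rewrite ltr_pM2l ?subr_gt0 // ltrDr.
rewrite oneBrE => ? ?.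
have -> : r ^+ 2 * A + B + r * M = A + B + M - (1 - r) * (A * (1 + r) + M) by ring.
lra.
Qed.

Section Phi1.
Variable R : realType.
Local Notation C := R[i].
Implicit Types q m : C.

Lemma tG3_cabs_y2_lt3 y1 y2 q : tG3 y1 y2 q -> cabs y2 < 3.
Proof.
move=> [q_lt1 [b1 [b2 [b_lt3 [_ ->]]]]].
have := cabsD b2 (conjc b1 * q); rewrite cabsM cabsJ.
by have := cabs_ge0 b1; have := cabs_ge0 q; nra.
Qed.

Lemma exists_unimodular_align m : exists2 u : C, cabs u = 1 & u * m = - (cabs m)%:C.
Proof.
have [-> | m_neq0] := eqVneq m 0; first by exists 1; rewrite ?cabs1 // cabs0 mulr0 oppr0.
have m_gt0 := cabs_gt0 m_neq0; have mC_neq0 : (cabs m)%:C != 0 by rewrite fmorph_eq0 gt_eqF.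
exists (- conjc m / (cabs m)%:C).
  by rewrite cabsM cabsN cabsJ cabsV cabs_real gtr0_norm // mulfV // gt_eqF.
by rewrite mulrAC mulNr [conjc m * m]mulrC -sqr_cabsE; field.
Qed.

Lemma exists_Phi1_ge y1 y2 q (L : R) : 0 <= L -> L < 1 -> L < cabs q ->
  cabs y2 < 3 -> cabs y2 <= cabs y1 -> y1 * y2 != 9 * q ->
  exists2 z, unit_disc z & L <= cabs (Phi1 z y1 y2 q).
Proof.
move=> L_ge0 L_lt1 L_lt_q y2_lt3 y2_le_y1 y1y2_neq.
set m := q * conjc y1 - (L ^+ 2)%:C * y2.
have [u u1 um] := exists_unimodular_align m.
have y2_ge0 := cabs_ge0 y2; have m_ge0 := cabs_ge0 m.
set A := 9 * cabs q ^+ 2 - L ^+ 2 * cabs y2 ^+ 2; set B := cabs y1 ^+ 2 - 9 * L ^+ 2.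
have A_gt0 : 0 < A.
  have q_gt0 : 0 < cabs q by apply: le_lt_trans L_lt_q.
  have : L * cabs y2 < 3 * cabs q.
    apply: (@le_lt_trans _ _ (cabs q * cabs y2)); first by rewrite ler_wpM2r // ltW.
    by rewrite mulrC ltr_pM2r.
  have -> : A = (3 * cabs q - L * cabs y2) * (3 * cabs q + L * cabs y2) by rewrite /A; ring.
  move=> Ly2_lt; have Ly2_ge0 := mulr_ge0 L_ge0 y2_ge0.
  by apply: mulr_gt0; lra.
have sum_gt0 : 0 < A + B + 6 * cabs m.
  have Lq : L ^+ 2 < cabs q ^+ 2 by nra.
  have L2_le1 : L ^+ 2 <= 1 by nra.
  have y21 : cabs y2 ^+ 2 <= cabs y1 ^+ 2 by nra.
  have : L ^+ 2 * cabs y2 ^+ 2 <= cabs y2 ^+ 2 by nra.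
  by rewrite /A /B; lra.
have [r /andP[r_gt0 r_lt1] f_gt0] := quadratic_pos_near1 A_gt0 (mulr_ge0 (ler0n _ 6) m_ge0) sum_gt0.
set z := r%:C * u.
have zE : cabs z = r by rewrite cabsM cabs_real u1 mulr1 gtr0_norm.
(* the cross term -6 r Re(u m) of the expansion becomes 6 r |m| by the choice of u *)
have gapE : cabs (3 * q * z - y1) ^+ 2 - L ^+ 2 * cabs (y2 * z - 3) ^+ 2 =
    r ^+ 2 * A + B + r * (6 * cabs m).
  have uu : u * conjc u = 1 by rewrite -sqr_cabsE u1 rmorph1 expr1n.
  have um' : conjc u * conjc m = - (cabs m)%:C by rewrite -conjcM um conjcN conjc_real.
  apply: complexI; transitivity ((r%:C) ^+ 2 * (9 * q * conjc q - (L%:C) ^+ 2 * y2 * conjc y2)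
      * (u * conjc u) + y1 * conjc y1 - 9 * (L%:C) ^+ 2 - 3 * r%:C * (u * m + conjc u * conjc m)).
    by rewrite /z /m; push_real_complex; ring.
  by rewrite uu um um' /A /B; push_real_complex; ring.
have den_neq0 : y2 * z - 3 != 0.
  apply: contraTneq y2_lt3 => /subr0_eq y2z3.
  have := congr1 (@cabs R) y2z3; rewrite cabsM zE (cabs_nat R 3) => y2r3.
  by rewrite -leNgt; nra.
exists z; first by rewrite /unit_disc /= zE.
rewrite /Phi1 (negbTE y1y2_neq) cabsM cabsV ler_pdivlMr ?cabs_gt0 //.
by have := cabs_ge0 (3 * q * z - y1); have := cabs_ge0 (y2 * z - 3); nra.
Qed.

Lemma cabs_q_le_of_Hinf_Phi1_lt y1 y2 q (L : R) : 0 <= L -> L < 1 ->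
  tG3 y1 y2 q -> y1 * y2 != 9 * q -> cabs y2 <= cabs y1 ->
  (Hinf_Phi1 y1 y2 q < L%:E)%E -> cabs q <= L.
Proof.
move=> L_ge0 L_lt1 dom y1y2_neq y2_le_y1 Hinf_lt; rewrite leNgt; apply/negP => L_lt_q.
have [z z_disc L_le] := exists_Phi1_ge L_ge0 L_lt1 L_lt_q (tG3_cabs_y2_lt3 dom) y2_le_y1 y1y2_neq.
have : ((cabs (Phi1 z y1 y2 q))%:E <= Hinf_Phi1 y1 y2 q)%E by apply: ereal_sup_ubound; exists z.
by rewrite leNgt => /negP; apply; apply: (lt_le_trans Hinf_lt); rewrite lee_fin.
Qed.

End Phi1.

Section Znu.
Variables (R : realType) (lam y1 y2 q w : R[i]) (nu : R).
Hypotheses (lam_neq0 : lam != 0) (nu_gt0 : 0 < nu).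
Hypotheses (y1y2_neq : y1 * y2 != 9 * q) (w2E : w ^+ 2 = (y1 * y2 - 9 * q) / (9 * lam)).

Lemma ZnuE : Znu y1 y2 lam w nu = mx2 (y1 / (3 * lam)) (nu%:C * w) (nu^-1%:C * w) (y2 / 3).
Proof. by []. Qed.

Lemma Znu_det : y1 / (3 * lam) * (y2 / 3) - nu%:C * w * (nu^-1%:C * w) = q / lam.
Proof.
have nuC_neq0 : nu%:C != 0 :> R[i] by rewrite fmorph_eq0 gt_eqF.
have -> : nu%:C * w * (nu^-1%:C * w) = w ^+ 2 by rewrite fmorphV; field.
by rewrite w2E; field.
Qed.

Lemma Znu_defect :
  mx2_defect (y1 / (3 * lam)) (nu%:C * w) (nu^-1%:C * w) (y2 / 3) =
  cabs (y1 * y2 - 9 * q) / (9 * cabs lam) *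
    (cabs lam / cabs (y1 * y2 - 9 * q) * (9 - cabs y1 ^+ 2 / cabs lam ^+ 2 - cabs y2 ^+ 2
       + 9 * cabs q ^+ 2 / cabs lam ^+ 2) - (nu ^+ 2 + (nu ^+ 2)^-1)).
Proof.
have lam_gt0 := cabs_gt0 lam_neq0.
have D_gt0 : 0 < cabs (y1 * y2 - 9 * q) by rewrite cabs_gt0 // subr_eq0.
have w_sq : cabs w ^+ 2 = cabs (y1 * y2 - 9 * q) / (9 * cabs lam).
  by rewrite expr2 -cabsM -expr2 w2E cabsM cabsV cabsM cabs_nat.
rewrite /mx2_defect Znu_det !cabsM !cabsV !cabs_real cabsM !cabs_nat !gtr0_norm ?invr_gt0 //.
by rewrite !exprMn w_sq; field; rewrite !gt_eqF.
Qed.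

End Znu.

Theorem mainTheorem16 (R : realType) (lam y1 y2 q w : R[i]) (th1 th2 : R) :
  cabs lam < 1 -> lam != 0 ->
  tG3 y1 y2 q ->
  y1 * y2 != 9 * q ->
  cabs y2 <= cabs y1 ->
  (Hinf_Phi1 y1 y2 q < (cabs lam)%:E)%E ->
  w ^+ 2 = (y1 * y2 - 9 * q) / (9 * lam) ->
  (let c : R := cabs lam / cabs (y1 * y2 - 9 * q) *
        (9 - (cabs y1) ^+ 2 / (cabs lam) ^+ 2 - (cabs y2) ^+ 2
           + 9 * (cabs q) ^+ 2 / (cabs lam) ^+ 2) in
   th1 + th1^-1 = c /\ th2 + th2^-1 = c) ->
  forall nu : R, 0 < nu -> th1 < nu ^+ 2 < th2 ->
    opnorm (Znu y1 y2 lam w nu) < 1 /\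
    ~ posdef (KZ (Znu y1 y2 lam w nu) (cabs lam)).
Proof.
move=> lam_lt1 lam_neq0 dom y1y2_neq y2_le_y1 Hinf_lt w2E [th1E th2E] nu nu_gt0 nu2_between.
have lam_gt0 := cabs_gt0 lam_neq0.
have q_le_lam := cabs_q_le_of_Hinf_Phi1_lt (ltW lam_gt0) lam_lt1 dom y1y2_neq y2_le_y1 Hinf_lt.
have nu2_lt := add_inv_lt_between_roots th1E th2E (exprn_gt0 2 nu_gt0) nu2_between.
have defect_gt0 : 0 < mx2_defect (y1 / (3 * lam)) (nu%:C * w) (nu^-1%:C * w) (y2 / 3).
  rewrite (Znu_defect lam_neq0 nu_gt0 y1y2_neq w2E) mulr_gt0 ?subr_gt0 // divr_gt0 ?mulr_gt0 //.
  by rewrite cabs_gt0 // subr_eq0.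
rewrite ZnuE; split.
  apply: opnorm_mx2_lt1; rewrite // (Znu_det lam_neq0 nu_gt0 w2E).
  by rewrite cabsM cabsV ler_pdivrMr // mul1r.
apply: KZ_mx2_not_posdef => //; first exact: ltW.
rewrite -exprMn !(cabsM, cabsV) cabs_nat.
have -> : cabs lam * (cabs y1 * (3 * cabs lam)^-1) = cabs y1 / 3 by field; rewrite gt_eqF.
by rewrite ler_pXn2r ?nnegrE ?divr_ge0 ?cabs_ge0 // ler_pM2r.
Qed.
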